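(* Let $\sigma(u)=1/(1+e^{-u})$, $\sigma_\tau(u)=\sigma(u/\tau)$ for $\tau>0$, and let $z$ be a standard logistic random variable with density $p_Z(u)=\sigma(u)(1-\sigma(u))$. Let $\eta\in\mathbb{R}$ and let $\mathcal L:[0,1]\to\mathbb{R}$ be continuously differentiable. Consider the binary variable $x\in\{0,1\}$ with $P(x=1)=\sigma(\eta)$, whose true gradient is $\frac{d}{d\eta}\mathbb{E}[\mathcal L(x)]=p_Z(\eta)(\mathcal L(1)-\mathcal L(0))$, and the Gumbel-Softmax estimator $\hat G_\tau=\frac{d}{d\eta}\mathcal L(\sigma_\tau(\eta-z))$. Then $\lim_{\tau\to0^+}\mathbb{E}_z[\hat G_\tau]=p_Z(\eta)(\mathcal L(1)-\mathcal L(0))$, and the bias satisfies $\mathbb{E}_z[\hat G_\tau]-p_Z(\eta)(\mathcal L(1)-\mathcal L(0))=O(\tau)$ as $\tau\to0^+$. *)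

From Stdlib Require Import Reals.
From Coquelicot Require Export Coquelicot.
Open Scope R_scope.

Definition sigma (u : R) : R := / (1 + exp (- u)).

Definition sigma_tau (tau u : R) : R := sigma (u / tau).

Definition pZ (u : R) : R := sigma u * (1 - sigma u).

Definition G_hat (L : R -> R) (tau eta z : R) : R :=
  Derive (fun e => L (sigma_tau tau (e - z))) eta.

Definition E_z (f : R -> R) : R :=
  RInt_gen (fun z => f z * pZ z) (Rbar_locally m_infty) (Rbar_locally p_infty).

Definition ex_E_z (f : R -> R) : Prop :=
  ex_RInt_gen (fun z => f z * pZ z) (Rbar_locally m_infty) (Rbar_locally p_infty).

Definition C1_on_01 (L : R -> R) : Prop :=
  exists Lp : R -> R,
    (forall x, 0 <= x <= 1 -> is_derive L x (Lp x)) /\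
    (forall x, 0 <= x <= 1 ->
       filterlim Lp (within (fun y => 0 <= y <= 1) (locally x)) (locally (Lp x))).

(* The relaxed estimator is an exact derivative in the noise variable:
   G_hat(z) = L'(sigma_tau(eta - z)) pZ((eta - z)/tau)/tau = d/dz [- L(sigma_tau(eta - z))],
   so its integral over z is L(1) - L(0), and the bias of E_z[G_hat] is the integral of
   G_hat(z) (pZ(z) - pZ(eta)).  With M a bound of L' on [0,1] and u = (eta - z)/tau we have
   |G_hat(z)| <= M pZ(u)/tau, and pZ is 1-Lipschitz, so the integrand is at most
   M |u| pZ(u) <= 8 M pZ(u/2), whose integral over z is 16 M tau.  The same domination gives
   integrability. *)

From Stdlib Require Import Reals Lra.
From Coquelicot Require Import Coquelicot.
Open Scope R_scope.

(** * Analysis on the real line *)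

Lemma filterlim_const_mult {T} (F : (T -> Prop) -> Prop) {FF : Filter F} (f : T -> R) k l :
  filterlim f F (locally l) -> filterlim (fun x => k * f x) F (locally (k * l)).
Proof. intros Hf. eapply filterlim_comp; [exact Hf | apply (filterlim_scal_r k l)]. Qed.

Lemma continuous_comp_within (D : R -> Prop) (f g : R -> R) x :
  (forall y, D (g y)) -> continuous g x ->
  filterlim f (within D (locally (g x))) (locally (f (g x))) ->
  continuous (fun y => f (g y)) x.
Proof.
  intros HD Hg Hf. eapply filterlim_comp; [|exact Hf].
  intros P HP. apply Hg in HP. unfold filtermap in *. eapply filter_imp; [|exact HP].
  intros y Hy. apply Hy, HD.
Qed.

Lemma exp_le_exp x y : x <= y -> exp x <= exp y.
Proof.
  intros [Hlt | ->]; [left; apply exp_increasing, Hlt | right; reflexivity].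
Qed.

Definition clamp (a b x : R) : R := Rmax a (Rmin x b).

Lemma clamp_bounds a b x : a <= b -> a <= clamp a b x <= b.
Proof. intros. unfold clamp, Rmax, Rmin. repeat destruct Rle_dec; lra. Qed.

Lemma clamp_id a b x : a <= x <= b -> clamp a b x = x.
Proof. intros. unfold clamp, Rmax, Rmin. repeat destruct Rle_dec; lra. Qed.

Lemma continuous_clamp a b x : continuous (clamp a b) x.
Proof.
  apply filterlim_locally. intro eps. exists eps. intros y Hy.
  change (Rabs (y - x) < eps) in Hy. change (Rabs (clamp a b y - clamp a b x) < eps).
  eapply Rle_lt_trans; [|exact Hy].
  unfold clamp, Rmax, Rmin, Rabs. repeat destruct Rle_dec; repeat destruct Rcase_abs; lra.
Qed.

Lemma continuous_within_bounded (f : R -> R) a b : a <= b ->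
  (forall x, a <= x <= b ->
     filterlim f (within (fun y => a <= y <= b) (locally x)) (locally (f x))) ->
  exists M, forall x, a <= x <= b -> Rabs (f x) <= M.
Proof.
  intros Hab Hf.
  (* Clamping to [a, b] turns continuity within [a, b] into continuity on the whole line. *)
  destruct (continuity_ab_maj (fun x => Rabs (f (clamp a b x))) a b) as [xmax [Hmax _]]; auto.
  { intros x _.
    apply continuity_pt_filterlim, (continuous_Rabs_comp (fun x => f (clamp a b x))).
    apply (continuous_comp_within (fun y => a <= y <= b)).
    - intro; apply clamp_bounds; auto.
    - apply continuous_clamp.
    - apply Hf, clamp_bounds; auto. }
  exists (Rabs (f (clamp a b xmax))). intros x Hx.
  rewrite <- (clamp_id a b x Hx). apply Hmax, Hx.
Qed.

Lemma filterlim_at_right_0_of_linear_bound (f : R -> R) l C :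
  (forall t, 0 < t -> Rabs (f t - l) <= C * t) -> filterlim f (at_right 0) (locally l).
Proof.
  intros Hf. apply filterlim_locally. intro eps.
  pose proof (Rabs_pos C). pose proof (Rle_abs C).
  assert (Hd : 0 < eps / (Rabs C + 1)) by (apply Rdiv_lt_0_compat; [apply cond_pos | lra]).
  exists (mkposreal _ Hd). intros t Ht Htpos.
  change (Rabs (t - 0) < eps / (Rabs C + 1)) in Ht. change (Rabs (f t - l) < eps).
  rewrite Rminus_0_r, Rabs_right in Ht by lra.
  apply Rmult_lt_compat_r with (r := Rabs C + 1) in Ht; [|lra].
  unfold Rdiv in Ht. rewrite Rmult_assoc, Rinv_l, Rmult_1_r in Ht by lra.
  pose proof (Hf t Htpos). nra.
Qed.

Lemma is_RInt_gen_primitive (f F : R -> R) la lb :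
  (forall x, is_derive F x (f x)) -> (forall x, continuous f x) ->
  filterlim F (Rbar_locally m_infty) (locally la) ->
  filterlim F (Rbar_locally p_infty) (locally lb) ->
  is_RInt_gen f (Rbar_locally m_infty) (Rbar_locally p_infty) (lb - la).
Proof.
  intros HF Hf Hla Hlb.
  assert (HD : forall x, Derive F x = f x) by (intro x; apply is_derive_unique, HF).
  apply (is_RInt_gen_ext (Derive F)).
  { apply filter_forall. intros ab x _. apply HD. }
  apply is_RInt_gen_Derive; auto; apply filter_forall; intros ab x _.
  - eexists; apply HF.
  - apply (continuous_ext f); [intro; symmetry; apply HD | apply Hf].
Qed.

Lemma ex_RInt_continuous_R (f : R -> R) a b :
  (forall x, continuous f x) -> ex_RInt f a b.
Proof. intros Hf. apply (ex_RInt_continuous (V := R_CompleteNormedModule)); auto. Qed.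

Lemma abs_RInt_le_primitive (f g G : R -> R) x y :
  (forall t, continuous f t) -> (forall t, continuous g t) ->
  (forall t, is_derive G t (g t)) -> (forall t, Rabs (f t) <= g t) ->
  x <= y -> Rabs (RInt f x y) <= G y - G x.
Proof.
  intros Hf Hg HG Hfg Hxy.
  replace (G y - G x) with (RInt g x y)
    by (apply is_RInt_unique, (is_RInt_derive G g); auto).
  eapply Rle_trans; [apply abs_RInt_le; auto; apply ex_RInt_continuous_R; auto|].
  apply RInt_le; auto; apply ex_RInt_continuous_R; auto.
  intro t; apply continuous_Rabs_comp, Hf.
Qed.

Lemma ex_filterlim_of_dominated_increments {T} (F : (T -> Prop) -> Prop)
    {FF : ProperFilter F} (f g : T -> R) a :
  (forall s t, Rabs (f t - f s) <= Rabs (g t - g s)) ->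
  filterlim g F (locally a) -> exists l, filterlim f F (locally l).
Proof.
  intros Hfg Hg. apply (proj1 (filterlim_locally_cauchy f)). intros eps.
  assert (He : 0 < eps / 2) by (pose proof (cond_pos eps); lra).
  exists (fun x => ball a (mkposreal _ He) (g x)). split.
  - apply (proj1 (filterlim_locally g a) Hg).
  - intros s t Hs Ht. change (Rabs (f t - f s) < eps).
    change (Rabs (g s - a) < eps / 2) in Hs. change (Rabs (g t - a) < eps / 2) in Ht.
    eapply Rle_lt_trans; [apply Hfg|].
    replace (g t - g s) with ((g t - a) - (g s - a)) by ring.
    eapply Rle_lt_trans; [apply Rabs_triang|]. rewrite Rabs_Ropp. lra.
Qed.

Lemma ex_RInt_gen_dominated (f g G : R -> R) a b :
  (forall x, continuous f x) -> (forall x, continuous g x) ->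
  (forall x, is_derive G x (g x)) -> (forall x, Rabs (f x) <= g x) ->
  filterlim G (Rbar_locally m_infty) (locally a) ->
  filterlim G (Rbar_locally p_infty) (locally b) ->
  ex_RInt_gen f (Rbar_locally m_infty) (Rbar_locally p_infty).
Proof.
  intros Hf Hg HG Hfg Ha Hb.
  set (F := fun x => RInt f 0 x).
  assert (HF : forall x, is_derive F x (f x)).
  { intro x. apply (is_derive_RInt f F 0); [|apply Hf].
    apply filter_forall. intro t.
    apply (RInt_correct (V := R_CompleteNormedModule)), ex_RInt_continuous_R, Hf. }
  assert (Hinc : forall s t, Rabs (F t - F s) <= Rabs (G t - G s)).
  { assert (Hle : forall s t, s <= t -> Rabs (F t - F s) <= Rabs (G t - G s)).
    2:{ intros s t. destruct (Rle_dec s t); [apply Hle; auto|].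
        rewrite (Rabs_minus_sym (F t)), (Rabs_minus_sym (G t)). apply Hle; lra. }
    intros s t Hst.
    assert (HChasles : F t - F s = RInt f s t).
    { unfold F. rewrite <- (RInt_Chasles f 0 s t) by (apply ex_RInt_continuous_R, Hf).
      unfold plus; simpl. ring. }
    rewrite HChasles.
    eapply Rle_trans; [apply (abs_RInt_le_primitive f g G); auto | apply Rle_abs]. }
  destruct (ex_filterlim_of_dominated_increments _ F G a Hinc Ha) as [la Hla].
  destruct (ex_filterlim_of_dominated_increments _ F G b Hinc Hb) as [lb Hlb].
  exists (lb - la). apply (is_RInt_gen_primitive f F); auto.
Qed.

(** * The logistic density *)

Lemma sigma_bounds u : 0 < sigma u < 1.
Proof.
  unfold sigma. pose proof (exp_pos (- u)).
  split.
  - apply Rinv_0_lt_compat; lra.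
  - rewrite <- Rinv_1. apply Rinv_lt_contravar; lra.
Qed.

Lemma sigma_opp u : sigma (- u) = 1 - sigma u.
Proof.
  unfold sigma. rewrite Ropp_involutive, exp_Ropp.
  pose proof (exp_pos u). field. lra.
Qed.

Lemma sigma_le_exp u : sigma u <= exp u.
Proof.
  unfold sigma. rewrite exp_Ropp. pose proof (exp_pos u).
  replace (/ (1 + / exp u)) with (exp u * / (exp u + 1)) by (field; lra).
  assert (/ (exp u + 1) <= 1) by (rewrite <- Rinv_1; apply Rinv_le_contravar; lra).
  nra.
Qed.

Lemma pZ_exp u : pZ u = / (2 + exp u + exp (- u)).
Proof.
  unfold pZ, sigma. rewrite exp_Ropp. pose proof (exp_pos u). field. repeat split; nra.
Qed.

Lemma pZ_bounds u : 0 < pZ u <= 1.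
Proof.
  rewrite pZ_exp. pose proof (exp_pos u). pose proof (exp_pos (- u)).
  split.
  - apply Rinv_0_lt_compat; lra.
  - rewrite <- Rinv_1. apply Rinv_le_contravar; lra.
Qed.

Lemma pZ_le_exp_abs u : pZ u <= exp (- Rabs u).
Proof.
  rewrite pZ_exp, (exp_Ropp (Rabs u)). pose proof (exp_pos u). pose proof (exp_pos (- u)).
  apply Rinv_le_contravar; [apply exp_pos|].
  unfold Rabs; destruct Rcase_abs; lra.
Qed.

Lemma exp_abs_le_pZ u : / (4 * exp (Rabs u)) <= pZ u.
Proof.
  rewrite pZ_exp. pose proof (exp_pos u). pose proof (exp_pos (- u)).
  assert (exp u <= exp (Rabs u)) by (apply exp_le_exp, RRle_abs).
  assert (exp (- u) <= exp (Rabs u)) by (apply exp_le_exp, Rabs_maj2).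
  assert (1 <= exp (Rabs u)) by (pose proof (exp_ineq1_le (Rabs u)); pose proof (Rabs_pos u); lra).
  apply Rinv_le_contravar; lra.
Qed.

Lemma abs_mul_pZ_le u : Rabs u * pZ u <= 8 * pZ (u / 2).
Proof.
  (* pZ u <= exp (-|u|), exp (-|u|/2) <= 4 pZ (u/2) and |u| <= 2 exp (|u|/2). *)
  pose proof (pZ_le_exp_abs u) as Hup. pose proof (exp_abs_le_pZ (u / 2)) as Hlow.
  assert (Habs : Rabs (u / 2) = Rabs u / 2).
  { unfold Rdiv. rewrite Rabs_mult, Rabs_inv, (Rabs_right 2) by lra. reflexivity. }
  assert (Hsq : exp (- Rabs u) = / (exp (Rabs u / 2) * exp (Rabs u / 2)))
    by (rewrite exp_Ropp, <- exp_plus; f_equal; f_equal; field).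
  pose proof (exp_ineq1_le (Rabs u / 2)). pose proof (Rabs_pos u).
  rewrite Habs in Hlow. rewrite Hsq in Hup.
  set (a := Rabs u) in *. set (b := exp (a / 2)) in *.
  assert (Hb : 0 < b) by apply exp_pos.
  apply Rle_trans with (a * / (b * b)); [apply Rmult_le_compat_l; lra|].
  apply Rle_trans with (8 * / (4 * b)); [|lra].
  replace (8 * / (4 * b)) with (2 * b * / (b * b)) by (field; lra).
  apply Rmult_le_compat_r; [left; apply Rinv_0_lt_compat; nra | lra].
Qed.

Lemma is_derive_sigma u : is_derive sigma u (pZ u).
Proof.
  rewrite pZ_exp. unfold sigma. pose proof (exp_pos (- u)).
  auto_derive; [lra|]. rewrite exp_Ropp. pose proof (exp_pos u). field. repeat split; nra.
Qed.

Lemma is_derive_pZ u : is_derive pZ u (pZ u * (1 - 2 * sigma u)).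
Proof.
  replace (pZ u * (1 - 2 * sigma u)) with (pZ u * (1 - sigma u) + sigma u * (0 - pZ u))
    by (unfold pZ; ring).
  apply (is_derive_mult sigma (fun t => 1 - sigma t)).
  - apply is_derive_sigma.
  - exact (is_derive_minus (fun _ => 1) sigma u 0 (pZ u) (is_derive_const 1 u) (is_derive_sigma u)).
  - intros; apply Rmult_comm.
Qed.

Lemma continuous_pZ u : continuous pZ u.
Proof. apply (ex_derive_continuous (V := R_NormedModule)). eexists; apply is_derive_pZ. Qed.

Lemma pZ_lipschitz a b : Rabs (pZ a - pZ b) <= Rabs (a - b).
Proof.
  destruct (MVT_gen pZ b a (fun u => pZ u * (1 - 2 * sigma u))) as [c [_ ->]].
  - intros; apply is_derive_pZ.
  - intros; apply continuity_pt_filterlim, continuous_pZ.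
  - pose proof (pZ_bounds c). pose proof (sigma_bounds c).
    assert (Rabs (1 - 2 * sigma c) <= 1) by (apply Rabs_le; lra).
    rewrite !Rabs_mult, (Rabs_right (pZ c)) by lra.
    pose proof (Rabs_pos (1 - 2 * sigma c)).
    rewrite <- (Rmult_1_l (Rabs (a - b))) at 2. apply Rmult_le_compat_r; [apply Rabs_pos | nra].
Qed.

Lemma filterlim_sigma_m_infty : filterlim sigma (Rbar_locally m_infty) (locally 0).
Proof.
  apply filterlim_locally. intros eps. exists (ln eps). intros v Hv.
  change (Rabs (sigma v - 0) < eps).
  pose proof (sigma_bounds v). pose proof (sigma_le_exp v).
  rewrite Rminus_0_r, Rabs_right by lra.
  eapply Rle_lt_trans; [eassumption|].
  rewrite <- (exp_ln eps) by apply cond_pos. apply exp_increasing, Hv.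
Qed.

Lemma filterlim_sigma_p_infty : filterlim sigma (Rbar_locally p_infty) (locally 1).
Proof.
  apply filterlim_locally. intros eps. exists (- ln eps). intros v Hv.
  change (Rabs (sigma v - 1) < eps).
  pose proof (sigma_bounds (- v)). pose proof (sigma_le_exp (- v)).
  rewrite <- Rabs_Ropp, Ropp_minus_distr, <- sigma_opp, Rabs_right by lra.
  eapply Rle_lt_trans; [eassumption|].
  rewrite <- (exp_ln eps) by apply cond_pos. apply exp_increasing. lra.
Qed.

(** * The rescaled logistic *)

Definition pZ_tau (c u : R) : R := pZ (u / c) / c.

Section Rescaled.

Variables (c eta : R).
Hypothesis Hc : 0 < c.

Lemma pZ_tau_pos u : 0 < pZ_tau c u.
Proof.
  unfold pZ_tau. pose proof (pZ_bounds (u / c)).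
  apply Rdiv_lt_0_compat; lra.
Qed.

Lemma abs_mul_pZ_tau_le u : Rabs u * pZ_tau c u <= 16 * c * pZ_tau (2 * c) u.
Proof.
  unfold pZ_tau. pose proof (abs_mul_pZ_le (u / c)) as H.
  replace (u / c / 2) with (u / (2 * c)) in H by (field; lra).
  unfold Rdiv in H. rewrite Rabs_mult, Rabs_inv, (Rabs_right c) in H by lra.
  apply Rle_trans with (Rabs u * / c * pZ (u * / c)); [right; unfold Rdiv; ring|].
  apply Rle_trans with (8 * pZ (u * / (2 * c))); [exact H | right; unfold Rdiv; field; lra].
Qed.

Lemma filterlim_rescale_m_infty :
  filterlim (fun z => (eta - z) / c) (Rbar_locally m_infty) (Rbar_locally p_infty).
Proof.
  intros P [M HM]. exists (eta - Rmax M 0 * c). intros z Hz. apply HM.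
  apply Rmult_lt_reg_r with c; [lra|]. unfold Rdiv. rewrite Rmult_assoc, Rinv_l by lra.
  pose proof (Rmax_l M 0). pose proof (Rmax_r M 0). nra.
Qed.

Lemma filterlim_rescale_p_infty :
  filterlim (fun z => (eta - z) / c) (Rbar_locally p_infty) (Rbar_locally m_infty).
Proof.
  intros P [M HM]. exists (eta - Rmin M 0 * c). intros z Hz. apply HM.
  apply Rmult_lt_reg_r with c; [lra|]. unfold Rdiv. rewrite Rmult_assoc, Rinv_l by lra.
  pose proof (Rmin_l M 0). pose proof (Rmin_r M 0). nra.
Qed.

Lemma filterlim_sigma_tau_rev_m_infty :
  filterlim (fun z => sigma_tau c (eta - z)) (Rbar_locally m_infty) (locally 1).
Proof.
  apply (filterlim_comp _ _ _ (fun z => (eta - z) / c) sigma _ (Rbar_locally p_infty)).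
  - apply filterlim_rescale_m_infty.
  - apply filterlim_sigma_p_infty.
Qed.

Lemma filterlim_sigma_tau_rev_p_infty :
  filterlim (fun z => sigma_tau c (eta - z)) (Rbar_locally p_infty) (locally 0).
Proof.
  apply (filterlim_comp _ _ _ (fun z => (eta - z) / c) sigma _ (Rbar_locally m_infty)).
  - apply filterlim_rescale_p_infty.
  - apply filterlim_sigma_m_infty.
Qed.

Lemma is_derive_sigma_tau u : is_derive (sigma_tau c) u (pZ_tau c u).
Proof.
  unfold sigma_tau, pZ_tau.
  assert (Hl : is_derive (fun u => u / c) u (/ c)) by (auto_derive; [auto | field; lra]).
  evar_last; [exact (is_derive_comp _ _ _ _ _ (is_derive_sigma _) Hl)|].
  unfold scal; simpl; unfold mult; simpl. field. lra.
Qed.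

Lemma is_derive_sigma_tau_rev z :
  is_derive (fun z => sigma_tau c (eta - z)) z (- pZ_tau c (eta - z)).
Proof.
  assert (Hl : is_derive (fun z => eta - z) z (-1)) by (auto_derive; [auto | ring]).
  evar_last; [exact (is_derive_comp _ _ _ _ _ (is_derive_sigma_tau _) Hl)|].
  unfold scal; simpl; unfold mult; simpl. ring.
Qed.

Lemma continuous_pZ_tau_rev z : continuous (fun z => pZ_tau c (eta - z)) z.
Proof.
  unfold pZ_tau. apply (ex_derive_continuous (V := R_NormedModule)).
  auto_derive. eexists; apply is_derive_pZ.
Qed.

Lemma is_derive_scal_sigma_tau_rev K z :
  is_derive (fun z => - K * sigma_tau c (eta - z)) z (K * pZ_tau c (eta - z)).
Proof.
  evar_last; [apply is_derive_scal, is_derive_sigma_tau_rev | ring].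
Qed.

Lemma is_RInt_gen_pZ_tau_rev K :
  is_RInt_gen (fun z => K * pZ_tau c (eta - z)) (Rbar_locally m_infty) (Rbar_locally p_infty) K.
Proof.
  evar_last; [apply (is_RInt_gen_primitive _ (fun z => - K * sigma_tau c (eta - z)))|].
  - apply is_derive_scal_sigma_tau_rev.
  - intro z. apply (continuous_mult (fun _ => K)); [apply continuous_const|].
    apply continuous_pZ_tau_rev.
  - exact (filterlim_const_mult _ _ _ _ filterlim_sigma_tau_rev_m_infty).
  - exact (filterlim_const_mult _ _ _ _ filterlim_sigma_tau_rev_p_infty).
  - ring.
Qed.

End Rescaled.

(** * The relaxed gradient *)

Lemma sigma_tau_01 c u : 0 <= sigma_tau c u <= 1.
Proof. pose proof (sigma_bounds (u / c)). unfold sigma_tau. lra. Qed.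

Section Estimator.

Variables (L Lp : R -> R) (M tau eta : R).
Hypothesis HLd : forall x, 0 <= x <= 1 -> is_derive L x (Lp x).
Hypothesis HLp : forall x, 0 <= x <= 1 ->
  filterlim Lp (within (fun y => 0 <= y <= 1) (locally x)) (locally (Lp x)).
Hypothesis HM : forall x, 0 <= x <= 1 -> Rabs (Lp x) <= M.
Hypothesis Htau : 0 < tau.

Definition relaxed_grad z := Lp (sigma_tau tau (eta - z)) * pZ_tau tau (eta - z).

Lemma is_derive_L_sigma_tau u :
  is_derive (fun u => L (sigma_tau tau u)) u (Lp (sigma_tau tau u) * pZ_tau tau u).
Proof.
  pose proof (is_derive_sigma_tau tau Htau u) as Hs.
  evar_last; [exact (is_derive_comp _ _ _ _ _ (HLd _ (sigma_tau_01 _ _)) Hs)|].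
  unfold scal; simpl; unfold mult; simpl. ring.
Qed.

Lemma G_hat_relaxed_grad z : G_hat L tau eta z = relaxed_grad z.
Proof.
  apply is_derive_unique.
  assert (Hl : is_derive (fun e => e - z) eta 1) by (auto_derive; [auto | ring]).
  evar_last; [exact (is_derive_comp _ _ _ _ _ (is_derive_L_sigma_tau _) Hl)|].
  unfold scal; simpl; unfold mult; simpl. unfold relaxed_grad. ring.
Qed.

Lemma is_derive_relaxed_primitive z :
  is_derive (fun z => - L (sigma_tau tau (eta - z))) z (relaxed_grad z).
Proof.
  assert (Hl : is_derive (fun z => eta - z) z (-1)) by (auto_derive; [auto | ring]).
  evar_last; [exact (is_derive_opp _ _ _ (is_derive_comp _ _ _ _ _ (is_derive_L_sigma_tau _) Hl))|].
  unfold opp, scal; simpl; unfold mult; simpl. unfold relaxed_grad. ring.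
Qed.

Lemma continuous_relaxed_grad z : continuous relaxed_grad z.
Proof.
  apply (continuous_mult (fun z => Lp (sigma_tau tau (eta - z)))).
  - apply (continuous_comp_within (fun y => 0 <= y <= 1)).
    + intro; apply sigma_tau_01.
    + apply (ex_derive_continuous (V := R_NormedModule)).
      eexists; apply is_derive_sigma_tau_rev; auto.
    + apply HLp, sigma_tau_01.
  - apply continuous_pZ_tau_rev; auto.
Qed.

Lemma filterlim_L_sigma_tau_rev (F : (R -> Prop) -> Prop) {FF : Filter F} x :
  0 <= x <= 1 -> filterlim (fun z => sigma_tau tau (eta - z)) F (locally x) ->
  filterlim (fun z => - L (sigma_tau tau (eta - z))) F (locally (- L x)).
Proof.
  intros Hx Hlim.
  eapply filterlim_comp; [eapply filterlim_comp; [exact Hlim|] | apply (filterlim_opp (L x))].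
  apply (ex_derive_continuous (V := R_NormedModule)). eexists; apply HLd, Hx.
Qed.

Lemma is_RInt_gen_relaxed_grad :
  is_RInt_gen relaxed_grad (Rbar_locally m_infty) (Rbar_locally p_infty) (L 1 - L 0).
Proof.
  evar_last; [apply (is_RInt_gen_primitive _ (fun z => - L (sigma_tau tau (eta - z))))|].
  - apply is_derive_relaxed_primitive.
  - apply continuous_relaxed_grad.
  - apply (filterlim_L_sigma_tau_rev _ 1); [lra | apply filterlim_sigma_tau_rev_m_infty; auto].
  - apply (filterlim_L_sigma_tau_rev _ 0); [lra | apply filterlim_sigma_tau_rev_p_infty; auto].
  - ring.
Qed.

Lemma abs_relaxed_grad_le z : Rabs (relaxed_grad z) <= M * pZ_tau tau (eta - z).
Proof.
  unfold relaxed_grad. pose proof (pZ_tau_pos tau Htau (eta - z)).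
  rewrite Rabs_mult, (Rabs_right (pZ_tau _ _)) by lra.
  apply Rmult_le_compat_r; [lra | apply HM, sigma_tau_01].
Qed.

Lemma ex_RInt_gen_relaxed_grad_pZ :
  ex_RInt_gen (fun z => relaxed_grad z * pZ z) (Rbar_locally m_infty) (Rbar_locally p_infty).
Proof.
  apply (ex_RInt_gen_dominated _ (fun z => M * pZ_tau tau (eta - z))
    (fun z => - M * sigma_tau tau (eta - z)) (- M * 1) (- M * 0)).
  - intro z. apply (continuous_mult relaxed_grad pZ).
    + apply continuous_relaxed_grad.
    + apply continuous_pZ.
  - intro z. apply (continuous_mult (fun _ => M)).
    + apply continuous_const.
    + apply continuous_pZ_tau_rev; auto.
  - intro z. apply is_derive_scal_sigma_tau_rev; auto.
  - intro z. pose proof (pZ_bounds z). pose proof (abs_relaxed_grad_le z).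
    rewrite Rabs_mult, (Rabs_right (pZ z)) by lra. pose proof (Rabs_pos (relaxed_grad z)). nra.
  - exact (filterlim_const_mult _ _ _ _ (filterlim_sigma_tau_rev_m_infty _ _ Htau)).
  - exact (filterlim_const_mult _ _ _ _ (filterlim_sigma_tau_rev_p_infty _ _ Htau)).
Qed.

Lemma abs_relaxed_grad_bias_le z :
  Rabs (relaxed_grad z * pZ z - pZ eta * relaxed_grad z)
  <= 16 * M * tau * pZ_tau (2 * tau) (eta - z).
Proof.
  assert (HM0 : 0 <= M) by (pose proof (HM 0 ltac:(lra)); pose proof (Rabs_pos (Lp 0)); lra).
  replace (relaxed_grad z * pZ z - pZ eta * relaxed_grad z)
    with (relaxed_grad z * (pZ z - pZ eta)) by ring.
  rewrite Rabs_mult.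
  apply Rle_trans with (M * pZ_tau tau (eta - z) * Rabs (eta - z)).
  { apply Rmult_le_compat; try apply Rabs_pos; [apply abs_relaxed_grad_le|].
    rewrite Rabs_minus_sym. apply pZ_lipschitz. }
  pose proof (abs_mul_pZ_tau_le tau Htau (eta - z)).
  replace (16 * M * tau * pZ_tau (2 * tau) (eta - z))
    with (M * (16 * tau * pZ_tau (2 * tau) (eta - z))) by ring.
  replace (M * pZ_tau tau (eta - z) * Rabs (eta - z))
    with (M * (Rabs (eta - z) * pZ_tau tau (eta - z))) by ring.
  apply Rmult_le_compat_l; auto.
Qed.

Lemma relaxed_grad_bias :
  Rabs (RInt_gen (fun z => relaxed_grad z * pZ z) (Rbar_locally m_infty) (Rbar_locally p_infty)
        - pZ eta * (L 1 - L 0)) <= 16 * M * tau.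
Proof.
  pose proof (RInt_gen_correct _ ex_RInt_gen_relaxed_grad_pZ) as Hint.
  pose proof (is_RInt_gen_scal _ (pZ eta) _ is_RInt_gen_relaxed_grad) as Hscal.
  refine (RInt_gen_norm _ _ _ _ _ _ (is_RInt_gen_minus _ _ _ _ Hint Hscal)
            (is_RInt_gen_pZ_tau_rev (2 * tau) eta ltac:(lra) (16 * M * tau))).
  - apply (Filter_prod _ _ _ (fun x => x < 0) (fun y => 0 < y));
      [exists 0; auto | exists 0; auto | simpl; intros; lra].
  - apply filter_forall. intros ab z _. apply abs_relaxed_grad_bias_le.
Qed.

Lemma G_hat_bias :
  ex_E_z (G_hat L tau eta) /\
  Rabs (E_z (G_hat L tau eta) - pZ eta * (L 1 - L 0)) <= 16 * M * tau.
Proof.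
  assert (Hext : forall z, relaxed_grad z * pZ z = G_hat L tau eta z * pZ z)
    by (intro z; rewrite G_hat_relaxed_grad; reflexivity).
  unfold ex_E_z, E_z. split.
  - exact (ex_RInt_gen_ext_eq _ _ Hext ex_RInt_gen_relaxed_grad_pZ).
  - rewrite <- (RInt_gen_ext_eq _ _ Hext ex_RInt_gen_relaxed_grad_pZ). apply relaxed_grad_bias.
Qed.

End Estimator.

Theorem propositionE1 (eta : R) (L : R -> R) (HL : C1_on_01 L) :
  (exists delta : R, 0 < delta /\
     forall tau, 0 < tau < delta -> ex_E_z (G_hat L tau eta)) /\
  filterlim (fun tau => E_z (G_hat L tau eta)) (at_right 0)
    (locally (pZ eta * (L 1 - L 0))) /\
  (exists C delta : R, 0 < delta /\
     forall tau, 0 < tau < delta ->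
       Rabs (E_z (G_hat L tau eta) - pZ eta * (L 1 - L 0)) <= C * tau).
Proof.
  destruct HL as [Lp [HLd HLp]].
  destruct (continuous_within_bounded Lp 0 1) as [M HM]; [lra | exact HLp |].
  assert (Hbias : forall tau, 0 < tau -> ex_E_z (G_hat L tau eta) /\
            Rabs (E_z (G_hat L tau eta) - pZ eta * (L 1 - L 0)) <= 16 * M * tau)
    by (intros; apply (G_hat_bias L Lp M); auto).
  split; [|split].
  - exists 1. split; [lra|]. intros tau Htau. apply Hbias. lra.
  - apply (filterlim_at_right_0_of_linear_bound _ _ (16 * M)). intros; apply Hbias; auto.
  - exists (16 * M), 1. split; [lra|]. intros tau Htau. apply Hbias. lra.
Qed.
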